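(* Let $f:\mathbb{R}^n\to\mathbb{R}$ be differentiable with $L$-Lipschitz gradient $\nabla f$. Let $\mathcal{E}^t$ denote the event $\|\nabla f(x^t)\|_\infty\le\eta$. If $x\in\mathbb{R}^n$ satisfies $\frac{L\alpha}{2}\|\nabla f(x)\|_1<\|\nabla f(x)\|_2^2$, then the iterate $x^{t+1}$ of Markov gradient descent satisfies $$\mathbb{E}\left[f(x^{t+1})\,\middle|\,x^t=x,\mathcal{E}^t\right]<f(x).$$ In particular, this holds whenever $\|\nabla f(x)\|_2>\frac{L\alpha\sqrt{n}}{2}$.
   Context: Markov gradient descent (MGD) with lattice resolution $\alpha>0$ and normalizer $\eta>0$: start at $x^0\in\alpha\mathbb{Z}^n$; at step $t$, for each coordinate $i$, conditionally on $x^t$, $\Delta^t_i\in\{0,1\}$ is Bernoulli with $\mathbb{P}[\Delta^t_i=1\mid x^t]=\min(|\partial_i f(x^t)|/\eta,1)$, and $x^{t+1}_i=x^t_i-\alpha\,\mathrm{sgn}(\partial_i f(x^t))\Delta^t_i$. *)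

From HB Require Import structures.
From mathcomp Require Import all_boot all_order all_algebra.
From mathcomp Require Import all_classical all_reals all_analysis.
Set Implicit Arguments. Unset Strict Implicit. Unset Printing Implicit Defensive.
Import Order.TTheory GRing.Theory Num.Theory.
Import numFieldNormedType.Exports.
Local Open Scope ring_scope.

Section MGD.
Variables (R : realType) (n : nat).

Definition basis_vec (i : 'I_n) : 'rV[R]_n := delta_mx 0 i.

Definition grad (f : 'rV[R]_n -> R) (x : 'rV[R]_n) : 'rV[R]_n :=
  \row_i ('D_(basis_vec i) f x).

Definition norm1 (v : 'rV[R]_n) : R := \sum_i `|v 0 i|.
Definition norm2 (v : 'rV[R]_n) : R := Num.sqrt (\sum_i (v 0 i) ^+ 2).
Definition norminf (v : 'rV[R]_n) : R := \big[Num.max/0]_i `|v 0 i|.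

Definition lipschitz_grad (L : R) (f : 'rV[R]_n -> R) : Prop :=
  (forall x, differentiable f x) /\
  (forall x y, norm2 (grad f x - grad f y) <= L * norm2 (x - y)).

(* A possible conditional law (given x^t = x) of the coin vector
   Delta^t = (Delta^t_i)_i in {0,1}^n: a probability mass function on
   {ffun 'I_n -> bool} whose i-th marginal is Bernoulli(min(|d_i f(x)|/eta, 1)).
   (The MGD definition only prescribes these marginals.) *)
Definition mgd_coin_law (eta : R) (g : 'rV[R]_n)
    (mu : {ffun 'I_n -> bool} -> R) : Prop :=
  [/\ forall d, 0 <= mu d,
      \sum_(d : {ffun 'I_n -> bool}) mu d = 1 &
      forall i, \sum_(d : {ffun 'I_n -> bool} | d i) mu d = Num.min (`|g 0 i| / eta) 1].

(* x^{t+1} as a function of x^t = x, the gradient g = grad f x and the coins d *)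
Definition mgd_next (alpha : R) (x g : 'rV[R]_n) (d : {ffun 'I_n -> bool})
    : 'rV[R]_n :=
  x - alpha *: \row_i (Num.sg (g 0 i) * (d i)%:R).

(* E[ f(x^{t+1}) | x^t = x ] under coin law mu *)
Definition mgd_expect (alpha : R) (f : 'rV[R]_n -> R) (x : 'rV[R]_n)
    (mu : {ffun 'I_n -> bool} -> R) : R :=
  \sum_(d : {ffun 'I_n -> bool}) mu d * f (mgd_next alpha x (grad f x) d).

End MGD.

(* By the descent lemma f (x + h) <= f x + <grad f x, h> + L/2 |h|_2^2, the value
   f (x^{t+1}) is bounded by an expression that is affine in the coins Delta_i: coordinate i
   moves by alpha sg(d_i f x) exactly when Delta_i = 1.  Hence only the marginals of the coin
   law enter the expectation, and on E^t they equal |d_i f x| / eta, which gives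
     E[f (x^{t+1})] <= f x - alpha/eta (|grad f x|_2^2 - L alpha/2 |grad f x|_1).
   The second claim follows from |v|_1 <= sqrt n |v|_2, together with L >= 0, which the
   Lipschitz bound forces as soon as n > 0. *)

From HB Require Import structures.
From mathcomp Require Import all_boot all_order all_algebra.
From mathcomp Require Import all_classical all_reals all_analysis.
From mathcomp Require Import ring lra.
Set Implicit Arguments. Unset Strict Implicit. Unset Printing Implicit Defensive.
Import Order.TTheory GRing.Theory Num.Theory.
Import numFieldNormedType.Exports.
Local Open Scope ring_scope.

Section Norms.
Variables (R : realType) (n : nat).
Implicit Types u v : 'rV[R]_n.

Definition dotv u v : R := \sum_i u 0 i * v 0 i.

Lemma norm2_ge0 v : 0 <= norm2 v.
Proof. exact: sqrtr_ge0. Qed.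

Lemma sqr_norm2 v : norm2 v ^+ 2 = \sum_i v 0 i ^+ 2.
Proof. by rewrite sqr_sqrtr // sumr_ge0 // => i _; exact: sqr_ge0. Qed.

Lemma norm2Z (a : R) v : norm2 (a *: v) = `|a| * norm2 v.
Proof.
rewrite /norm2 (eq_bigr (fun i => a ^+ 2 * v 0 i ^+ 2)) => [|i _]; last first.
  by rewrite mxE exprMn.
by rewrite -mulr_sumr sqrtrM ?sqr_ge0 // sqrtr_sqr.
Qed.

Lemma sqr_dotv_le u v : dotv u v ^+ 2 <= norm2 u ^+ 2 * norm2 v ^+ 2.
Proof.
rewrite !sqr_norm2 -subr_ge0.
have lagrange_identity : \sum_i \sum_j (u 0 i * v 0 j - u 0 j * v 0 i) ^+ 2 =
    2 * ((\sum_i u 0 i ^+ 2) * (\sum_j v 0 j ^+ 2) - dotv u v ^+ 2).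
  have expand i j : (u 0 i * v 0 j - u 0 j * v 0 i) ^+ 2 =
      u 0 i ^+ 2 * v 0 j ^+ 2 + u 0 j ^+ 2 * v 0 i ^+ 2
      - (u 0 i * v 0 i * (u 0 j * v 0 j)) *+ 2 by ring.
  under eq_bigr => i _ do under eq_bigr => j _ do rewrite expand.
  rewrite /dotv expr2 !big_distrlr /=.
  under eq_bigr => i _ do rewrite sumrB big_split /=.
  rewrite sumrB big_split /= [X in _ + X - _]exchange_big /=.
  under [X in _ - X]eq_bigr => i _ do rewrite sumrMnl.
  by rewrite sumrMnl; ring.
have : 0 <= \sum_i \sum_j (u 0 i * v 0 j - u 0 j * v 0 i) ^+ 2.
  by do 2!apply: sumr_ge0 => ? _; exact: sqr_ge0.
by rewrite lagrange_identity pmulr_rge0.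
Qed.

Lemma dotv_le_norm2 u v : dotv u v <= norm2 u * norm2 v.
Proof.
apply: le_trans (ler_norm _) _.
rewrite -ler_sqr ?nnegrE ?mulr_ge0 ?norm2_ge0 // real_normK ?num_real //.
by rewrite exprMn sqr_dotv_le.
Qed.

Lemma dotvBl u1 u2 v : dotv (u1 - u2) v = dotv u1 v - dotv u2 v.
Proof. by rewrite /dotv -sumrB; apply: eq_bigr => i _; rewrite !mxE mulrBl. Qed.

Lemma norm2_const1 : norm2 (const_mx 1 : 'rV[R]_n) = Num.sqrt n%:R.
Proof.
by rewrite /norm2 (eq_bigr (fun=> 1)) ?sumr_const ?card_ord // => i _; rewrite mxE expr1n.
Qed.

Lemma norm2_map_norm v : norm2 (map_mx Num.norm v) = norm2 v.
Proof. by congr Num.sqrt; apply: eq_bigr => i _; rewrite mxE real_normK ?num_real. Qed.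

Lemma norm1_le_sqrt_norm2 v : norm1 v <= Num.sqrt n%:R * norm2 v.
Proof.
have := dotv_le_norm2 (map_mx Num.norm v) (const_mx 1).
rewrite norm2_const1 norm2_map_norm mulrC /dotv /norm1.
by under eq_bigr => i _ do rewrite !mxE mulr1.
Qed.

Lemma norm1_lt_sqr_norm2 (c : R) v :
  0 <= c * Num.sqrt n%:R -> c * Num.sqrt n%:R < norm2 v -> c * norm1 v < norm2 v ^+ 2.
Proof.
move=> c_ge0 c_lt; have v_gt0 : 0 < norm2 v := le_lt_trans c_ge0 c_lt.
have norm1_ge0 : 0 <= norm1 v by apply: sumr_ge0 => i _.
have [c0|c_lt0] := leP 0 c.
  apply: le_lt_trans (ler_wpM2l c0 (norm1_le_sqrt_norm2 v)) _.
  by rewrite mulrA expr2 ltr_pM2r.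
have sqrt_n0 : Num.sqrt (n%:R : R) = 0.
  by apply/le_anti; rewrite sqrtr_ge0 andbT -(ler_nM2l c_lt0) mulr0.
have norm1_0 : norm1 v = 0.
  apply/le_anti; rewrite norm1_ge0 andbT.
  by have := norm1_le_sqrt_norm2 v; rewrite sqrt_n0 mul0r.
by rewrite norm1_0 mulr0 exprn_gt0.
Qed.

End Norms.

Section LipschitzGradient.
Variables (R : realType) (n : nat) (f : 'rV[R]_n -> R).

Lemma derive_gradE z v : differentiable f z -> 'D_v f z = dotv (grad f z) v.
Proof.
move=> df; rewrite deriveE // {1}(row_sum_delta v) linear_sum /dotv.
by apply: eq_bigr => i _; rewrite linearZ /= mxE -deriveE // mulrC.
Qed.

Lemma is_derive_line x h t : differentiable f (x + t *: h) ->
  is_derive t 1 (fun s => f (x + s *: h)) (dotv (grad f (x + t *: h)) h).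
Proof.
move=> df; have dfh : derivable f (x + t *: h) h by exact: diff_derivable.
have quotient_line : (fun s : R => s^-1 *: (f (x + (s *: 1 + t) *: h) - f (x + t *: h)))
    = (fun s => s^-1 *: (f (s *: h + (x + t *: h)) - f (x + t *: h))).
  by apply/funext => s; rewrite [s *: 1]mulr1 scalerDl addrCA addrC.
by split; rewrite /derivable /derive /= quotient_line // -derive_gradE.
Qed.

Variable L : R.
Hypothesis fL : lipschitz_grad L f.

Lemma lipschitz_grad_const_ge0 : 0 <= L * Num.sqrt n%:R.
Proof.
have := fL.2 0 (const_mx 1).
rewrite sub0r -(scaleN1r (const_mx 1)) norm2Z normrN normr1 mul1r.
by rewrite norm2_const1; apply: le_trans; exact: norm2_ge0.
Qed.

Lemma lipschitz_grad_slope x h s : 0 <= s ->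
  dotv (grad f (x + s *: h)) h - dotv (grad f x) h <= s * L * norm2 h ^+ 2.
Proof.
move=> s_ge0; rewrite -dotvBl; apply: le_trans (dotv_le_norm2 _ _) _.
rewrite expr2 mulrA ler_wpM2r ?norm2_ge0 //.
have := fL.2 (x + s *: h) x; rewrite addrAC subrr add0r norm2Z ger0_norm //.
by rewrite mulrCA mulrA.
Qed.

Lemma lipschitz_grad_descent x h :
  f (x + h) <= f x + dotv (grad f x) h + L / 2 * norm2 h ^+ 2.
Proof.
set G0 := dotv (grad f x) h; set c := L / 2 * norm2 h ^+ 2.
pose psi := (fun s => f (x + s *: h)) - ((@id R) * cst G0 + (@id R) ^+ 2 * cst c).
have psi_deriv (s : R) :
    is_derive s 1 psi (dotv (grad f (x + s *: h)) h - (G0 + 2 * s * c)).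
  apply: is_derive_eq; first exact/is_deriveB/is_derive_line/fL.1.
  congr (_ - _); rewrite !scaler0 !add0r /cst /= ![_%:A]mulr1 expr1.
  by rewrite -[c *: _]/(c * (2 * s)); ring.
have psi_deriv_le0 (s : R) : 0 <= s ->
    dotv (grad f (x + s *: h)) h - (G0 + 2 * s * c) <= 0.
  move=> s_ge0; have := lipschitz_grad_slope x h s_ge0.
  have -> : 2 * s * c = s * L * norm2 h ^+ 2 by rewrite /c; field.
  by rewrite opprD addrA subr_le0.
have psi_derivable (s : R) : derivable psi s 1 by case: (psi_deriv s).
have : psi 1 <= psi 0.
  apply: (@ler0_derive1_le_cc R psi 0 1 (fun s _ => psi_derivable s));
    rewrite ?bound_itvE ?ler01 //.
  - move=> s; rewrite in_itv /= => /andP[s_gt0 _].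
    by rewrite derive1E derive_val psi_deriv_le0 ?ltW.
  - by apply: derivable_within_continuous => s _; exact: psi_derivable.
rewrite /psi !fctE scale1r scale0r addr0 expr1n expr0n /= !mul1r !mul0r.
by rewrite addr0 subr0 lerBlDr addrA.
Qed.

End LipschitzGradient.

Lemma mgd_coin_mean (R : realType) (n : nat) (eta : R) (g : 'rV[R]_n) mu i :
  0 < eta -> norminf g <= eta -> mgd_coin_law eta g mu ->
  \sum_d mu d * (d i)%:R = `|g 0 i| / eta.
Proof.
move=> eta_gt0 g_le [_ _ marginal].
have gi_le1 : `|g 0 i| / eta <= 1.
  by rewrite ler_pdivrMr // mul1r (le_trans _ g_le) // /norminf le_bigmax.
rewrite -(min_l gi_le1) -marginal [RHS]big_mkcond /=; apply: eq_bigr => d _.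
by case: (d i); rewrite ?mulr1 ?mulr0.
Qed.

Lemma normr_mul_sqr_sg (R : realDomainType) (x : R) : `|x| * Num.sg x ^+ 2 = `|x|.
Proof. by rewrite expr2 mulrA [`|x| * _]mulrC -numEsg mulrC -normrEsg. Qed.

Section MarkovGradientDescent.
Variables (R : realType) (n : nat) (alpha eta L : R) (f : 'rV[R]_n -> R).
Hypothesis fL : lipschitz_grad L f.

Lemma mgd_next_descent x d :
  f (mgd_next alpha x (grad f x) d) <= f x + \sum_i (d i)%:R *
    (L / 2 * alpha ^+ 2 * Num.sg (grad f x 0 i) ^+ 2 - alpha * `|grad f x 0 i|).
Proof.
rewrite /mgd_next; apply: le_trans (lipschitz_grad_descent fL x _) _.
move: (grad f x) => g; rewrite -addrA lerD2l sqr_norm2 /dotv mulr_sumr -big_split.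
apply: ler_sum => i _; rewrite !mxE (normrEsg (g 0 i)).
by case: (d i) => /=; lra.
Qed.

Lemma mgd_expect_le x mu :
  0 < eta -> norminf (grad f x) <= eta -> mgd_coin_law eta (grad f x) mu ->
  mgd_expect alpha f x mu <=
    f x - alpha / eta * (norm2 (grad f x) ^+ 2 - L * alpha / 2 * norm1 (grad f x)).
Proof.
move=> eta_gt0 g_le mu_law; have [mu_ge0 mu_sum1 _] := mu_law.
apply: le_trans (ler_sum _ (fun d _ => ler_wpM2l (mu_ge0 d) (mgd_next_descent x d))) _.
under eq_bigr => d _ do rewrite mulrDr mulr_sumr.
rewrite big_split /= -mulr_suml mu_sum1 mul1r exchange_big /= lerD2l.
under eq_bigr => i _ do under eq_bigr => d _ do rewrite mulrA.
under eq_bigr => i _ do rewrite -mulr_suml (mgd_coin_mean i eta_gt0 g_le mu_law).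
rewrite sqr_norm2 /norm1 mulr_sumr -sumrB mulr_sumr -sumrN.
apply: ler_sum => i _; move: (grad f x 0 i) => gi.
rewrite -(real_normK (num_real gi)).
have -> : `|gi| / eta * (L / 2 * alpha ^+ 2 * Num.sg gi ^+ 2 - alpha * `|gi|) =
    `|gi| * Num.sg gi ^+ 2 * (L / 2 * alpha ^+ 2 / eta) - alpha / eta * `|gi| ^+ 2.
  by ring.
rewrite normr_mul_sqr_sg; lra.
Qed.

End MarkovGradientDescent.

Theorem corollary6p2 (R : realType) (n : nat) (f : 'rV[R]_n -> R)
    (L alpha eta : R) (x : 'rV[R]_n) (mu : {ffun 'I_n -> bool} -> R) :
  0 < alpha -> 0 < eta ->
  lipschitz_grad L f ->
  (* the event E^t : ||grad f(x^t)||_inf <= eta, with x^t = x *)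
  norminf (grad f x) <= eta ->
  mgd_coin_law eta (grad f x) mu ->
  ((L * alpha / 2) * norm1 (grad f x) < (norm2 (grad f x)) ^+ 2 ->
     mgd_expect alpha f x mu < f x) /\
  ((L * alpha * Num.sqrt (n%:R)) / 2 < norm2 (grad f x) ->
     mgd_expect alpha f x mu < f x).
Proof.
move=> alpha_gt0 eta_gt0 fL g_le mu_law.
have expect_le := mgd_expect_le alpha fL eta_gt0 g_le mu_law.
have decrease : L * alpha / 2 * norm1 (grad f x) < norm2 (grad f x) ^+ 2 ->
    mgd_expect alpha f x mu < f x.
  move=> gap; apply: le_lt_trans expect_le _.
  by rewrite ltrBlDr ltrDl mulr_gt0 ?divr_gt0 // subr_gt0.
split=> // large_grad; apply: decrease; rewrite mulrAC in large_grad.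
apply: norm1_lt_sqr_norm2 large_grad.
have -> : L * alpha / 2 * Num.sqrt n%:R = L * Num.sqrt n%:R * (alpha / 2) by ring.
apply: mulr_ge0; first exact: lipschitz_grad_const_ge0 fL.
by rewrite divr_ge0 ?ltW.
Qed.
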